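(* Let $R$ be a ring with identity and involution $*$, and let $a,b\in R$ with $Ra=Ra^2$. Then the following are equivalent: (1) $a$ is core invertible with core inverse $b$; (2) $aba=a$, $(ab)^*=ab$ and $ab^2=b$.
   Context: An involution on $R$ satisfies $(a^* )^*=a$, $(ab)^*=b^*a^*$, $(a+b)^*=a^*+b^*$. An element $x\in R$ is a core inverse of $a$ if $axa=a$, $xR=aR$ and $Rx=Ra^*$; it is unique when it exists. $Ra=\{ra: r\in R\}$. *)

From mathcomp Require Import all_boot all_algebra.
Set Implicit Arguments. Unset Strict Implicit. Unset Printing Implicit Defensive.
Import GRing.Theory.
Local Open Scope ring_scope.

Definition involution (R : pzRingType) (star : R -> R) : Prop :=
  [/\ forall a, star (star a) = a,
      forall a b, star (a * b) = star b * star a &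
      forall a b, star (a + b) = star a + star b].

Definition rideal (R : pzRingType) (x : R) : R -> Prop := fun y => exists r, y = x * r.
Definition lideal (R : pzRingType) (x : R) : R -> Prop := fun y => exists r, y = r * x.

Definition seteqR (R : pzRingType) (P Q : R -> Prop) : Prop := forall y, P y <-> Q y.

Definition core_inverse (R : pzRingType) (star : R -> R) (a x : R) : Prop :=
  [/\ a * x * a = a,
      seteqR (rideal x) (rideal a) &
      seteqR (lideal x) (lideal (star a))].

From mathcomp Require Import all_boot all_algebra.
Local Open Scope ring_scope.
Import GRing.Theory.

Set Implicit Arguments.
Unset Strict Implicit.

(* If b is a core inverse of a, then b = b b^* a^*, so ab = ab (ab)^* is hermitian,
   and b in aR gives ab^2 = b.  Conversely, write a = r a^2 and x = ba^2 - a: then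
   abx = x and ax = 0, so x = abx = r a (abx) = r (ax) = 0; hence ba^2 = a and
   b = ba^2 b^2 = bab.  The ideal equalities then follow from b = a b^2, a = b a^2,
   b = b b^* a^* and a^* = a^* a b. *)

Section PrincipalIdeals.
Variable R : pzRingType.
Implicit Types x y : R.

Lemma seteqR_rideal x y :
  rideal y x -> rideal x y -> seteqR (rideal x) (rideal y).
Proof.
move=> [s ->] [t yE] z; split=> -[u ->]; first by exists (s * u); rewrite mulrA.
by exists (t * u); rewrite mulrA -yE.
Qed.

Lemma seteqR_lideal x y :
  lideal y x -> lideal x y -> seteqR (lideal x) (lideal y).
Proof.
move=> [s ->] [t yE] z; split=> -[u ->]; first by exists (u * s); rewrite mulrA.
by exists (u * t); rewrite -mulrA -yE.
Qed.

End PrincipalIdeals.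

Section InnerInverse.
Variable R : pzRingType.
Variables a b : R.
Hypothesis aba : a * b * a = a.

Lemma mul_sqrr_of_rideal : rideal a b -> a * b ^+ 2 = b.
Proof. by move=> [s bE]; rewrite expr2 mulrA {2}bE mulrA aba -bE. Qed.

Lemma mul_sqrl_of_lideal_sqr :
  lideal (a ^+ 2) a -> a * b ^+ 2 = b -> b * a ^+ 2 = a.
Proof.
move=> [r aE] abb; set x := b * a ^+ 2 - a.
have abxE : a * b * x = x.
  by rewrite mulrBr aba mulrA -(mulrA a) -expr2 abb.
have ax0 : a * x = 0 by rewrite mulrBr expr2 !mulrA aba subrr.
have abx0 : a * b * x = 0.
  by rewrite {1}aE expr2 -!mulrA (mulrA a b) abxE ax0 !mulr0.
by apply/eqP; rewrite -subr_eq0 -/x -abxE abx0.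
Qed.

End InnerInverse.

Lemma reflexive_of_mul_sqr (R : pzRingType) (a b : R) :
  b * a ^+ 2 = a -> a * b ^+ 2 = b -> b * a * b = b.
Proof. by move=> ba2 ab2; rewrite -{2}ab2 mulrA -(mulrA b) -expr2 ba2 ab2. Qed.

Section Involution.
Variables (R : pzRingType) (star : R -> R).
Hypothesis star_inv : involution star.

Let starK x : star (star x) = x. Proof. by case: star_inv. Qed.
Let starM x y : star (x * y) = star y * star x. Proof. by case: star_inv. Qed.

Variables a b : R.
Hypothesis aba : a * b * a = a.

Lemma hermitian_of_lideal_star : lideal (star a) b -> star (a * b) = a * b.
Proof.
move=> [r bE].
have bbE : b = b * star b * star a by rewrite {1}bE -{1}aba !starM !mulrA -bE.
have abE : a * b = a * b * star (a * b) by rewrite {1}bbE starM !mulrA.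
by rewrite {1}abE starM starK.
Qed.

Lemma lideal_star_of_hermitian :
  star (a * b) = a * b -> b * a * b = b -> seteqR (lideal b) (lideal (star a)).
Proof.
move=> abH bab; apply: seteqR_lideal.
  by exists (b * star b); rewrite -mulrA -starM abH mulrA bab.
by exists (star a * a); rewrite -mulrA -abH -starM aba.
Qed.

End Involution.

Theorem theorem3p3 (R : pzRingType) (star : R -> R) (a b : R) :
  involution star ->
  seteqR (lideal a) (lideal (a ^+ 2)) ->
  (core_inverse star a b <->
   [/\ a * b * a = a, star (a * b) = a * b & a * b ^+ 2 = b]).
Proof.
move=> star_inv aRa2; split.
  case=> aba bRa bRsa; split=> //.
    by apply: hermitian_of_lideal_star => //; apply/bRsa; exists 1; rewrite mul1r.
  by apply: mul_sqrr_of_rideal => //; apply/bRa; exists 1; rewrite mulr1.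
case=> aba abH ab2.
have ba2 : b * a ^+ 2 = a.
  by apply: mul_sqrl_of_lideal_sqr => //; apply/aRa2; exists 1; rewrite mul1r.
split=> //.
  by apply: seteqR_rideal; [exists (b ^+ 2); rewrite ab2 | exists (a ^+ 2); rewrite ba2].
exact: (lideal_star_of_hermitian star_inv aba abH (reflexive_of_mul_sqr ba2 ab2)).
Qed.
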